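(* Let $q\ge1$, let $a_k,b_k$ be real with $b_k>a_k>0$ for $k=1,\dots,q$, and let $\sigma\ge1$. Then for all $x>-1$, $x\neq 0$, $$ \frac{1}{\left(1+x\prod_{i=1}^q (a_i/b_i)\right)^{\sigma}}<{}_{q+1}F_q(\sigma,a_1,\dots,a_q;b_1,\dots,b_q;-x). $$
   Context: ${}_{q+1}F_q(\alpha_1,\dots,\alpha_{q+1};\beta_1,\dots,\beta_q;z)=\sum_{n\ge0}\frac{(\alpha_1)_n\cdots(\alpha_{q+1})_n}{(\beta_1)_n\cdots(\beta_q)_n n!}z^n$ with $(a)_n=a(a+1)\cdots(a+n-1)$, analytically continued to $\mathbb C\setminus[1,\infty)$. (At $x=0$ both sides equal $1$.) *)

From Stdlib Require Import Reals.
From Coquelicot Require Import Coquelicot.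
Open Scope R_scope.

Fixpoint poch (a : R) (n : nat) : R :=
  match n with
  | O => 1
  | S m => poch a m * (a + INR m)
  end.

Fixpoint prodR (q : nat) (f : nat -> R) : R :=
  match q with
  | O => 1
  | S m => prodR m f * f m
  end.

(* Coefficient of z^n in  _{q+1}F_q(sigma, a_0..a_{q-1}; b_0..b_{q-1}; z)
   (the paper's a_1..a_q, b_1..b_q are indexed here from 0 to q-1). *)
Definition hyp_coef (q : nat) (sigma : R) (a b : nat -> R) (n : nat) : R :=
  poch sigma n * prodR q (fun i => poch (a i) n / poch (b i) n) / INR (Factorial.fact n).

Definition real_analytic_on (U : R -> Prop) (f : R -> R) : Prop :=
  forall x0, U x0 -> exists r, 0 < r /\ exists c : nat -> R,
    forall x, Rabs (x - x0) < r -> is_pseries c (x - x0) (f x).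

(* f is the (real) analytic continuation of the hypergeometric series to
   (-oo, 1), i.e. the restriction to the real axis of the analytic
   continuation of  _{q+1}F_q  to C \ [1, oo). *)
Definition is_hyp_pFq (q : nat) (sigma : R) (a b : nat -> R) (f : R -> R) : Prop :=
  real_analytic_on (fun z => z < 1) f /\
  forall z, -1 < z < 1 -> is_pseries (hyp_coef q sigma a b) z (f z).

(* The coefficients of the series are [poch sigma n * m n / n!] where
   [m n = prod_i poch (a i) n / poch (b i) n] is the moment sequence of a product [T] of
   independent Beta(a_i, b_i - a_i) variables, with mean [c = prod_i a_i / b_i].

   For [-1 < x < 0], factorwise [poch a n / poch b n >= (a / b)^n] gives [m n >= c^n], strictly
   for [n = 2], and the claim follows by comparing the series termwise with the binomial series
   of [(1 - c (-x))^-sigma].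

   For [x > 0], Pfaff's transformation [G w = (1 - w)^-sigma F (w / (w - 1))] with
   [w = x / (1 + x)] turns the claim into [K w < G w], where [K w = (1 - (1 - c) w)^-sigma].
   At [w = 0] the [k]-th derivative of [G] is [poch sigma k * E[(1 - T)^k]], which by Jensen
   dominates the [k]-th derivative [poch sigma k * (1 - c)^k] of [K]. As [F] is only known to
   be analytic on [(-oo, 1)], this domination of all derivatives is carried from [0] across
   [[0, 1)] by real induction, using the Taylor expansions of [G] at every point. *)

From Stdlib Require Import Reals Lra Lia.
From Coquelicot Require Import Coquelicot.
Open Scope R_scope.
Notation fact := Factorial.fact.

Lemma poch_pos x n : 0 < x -> 0 < poch x n.
Proof.
  intros Hx; induction n; simpl; [lra|]. apply Rmult_lt_0_compat; auto.
  pose proof (pos_INR n); lra.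
Qed.

Lemma poch_add x m n : poch x (m + n) = poch x m * poch (x + INR m) n.
Proof.
  induction n.
  - rewrite Nat.add_0_r; simpl; ring.
  - rewrite Nat.add_succ_r; simpl; rewrite IHn, plus_INR; ring.
Qed.

Lemma prodR_ext q f g : (forall i, (i < q)%nat -> f i = g i) -> prodR q f = prodR q g.
Proof. induction q; intros H; simpl; auto. rewrite IHq, H; auto; intros; apply H; lia. Qed.

Lemma prodR_pos q f : (forall i, (i < q)%nat -> 0 < f i) -> 0 < prodR q f.
Proof.
  induction q; intros H; simpl; [lra|].
  apply Rmult_lt_0_compat; [apply IHq; intros; apply H; lia | apply H; lia].
Qed.

Lemma prodR_nonneg q f : (forall i, (i < q)%nat -> 0 <= f i) -> 0 <= prodR q f.
Proof.
  induction q; intros H; simpl; [lra|].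
  apply Rmult_le_pos; [apply IHq; intros; apply H; lia | apply H; lia].
Qed.

Lemma prodR_le q f g : (forall i, (i < q)%nat -> 0 <= f i <= g i) -> prodR q f <= prodR q g.
Proof.
  induction q; intros H; simpl; [lra|].
  assert (0 <= prodR q f) by (apply prodR_nonneg; intros i Hi; apply H; lia).
  destruct (H q ltac:(lia)).
  apply Rmult_le_compat; try lra. apply IHq; intros; apply H; lia.
Qed.

Lemma prodR_lt q f g : (1 <= q)%nat -> (forall i, (i < q)%nat -> 0 < f i < g i) ->
  prodR q f < prodR q g.
Proof.
  intros Hq H. destruct q as [|q]; [lia|]. simpl.
  assert (prodR q f <= prodR q g) by (apply prodR_le; intros i Hi; specialize (H i ltac:(lia)); lra).
  assert (0 < prodR q f) by (apply prodR_pos; intros i Hi; apply H; lia).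
  destruct (H q ltac:(lia)). nra.
Qed.

Lemma prodR_pow q f n : prodR q (fun i => f i ^ n) = prodR q f ^ n.
Proof. induction q; simpl; [rewrite pow1; ring|]. rewrite IHq, Rpow_mult_distr. ring. Qed.

Lemma prodR_one q : prodR q (fun _ => 1) = 1.
Proof. induction q; simpl; [ring|]. rewrite IHq; ring. Qed.

Lemma sum_f_R0_nonneg f n : (forall i, (i <= n)%nat -> 0 <= f i) -> 0 <= sum_f_R0 f n.
Proof.
  induction n; intros H; simpl; [apply H; lia|].
  apply Rplus_le_le_0_compat; [apply IHn; intros; apply H; lia | apply H; lia].
Qed.

(* Unlike [Binomial.C], [binom n k = 0] for [n < k]. *)
Fixpoint binom (n k : nat) : R :=
  match n, k with
  | _, O => 1
  | O, S _ => 0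
  | S n', S k' => binom n' k' + binom n' (S k')
  end.

Lemma binom_gt n k : (n < k)%nat -> binom n k = 0.
Proof.
  revert k; induction n as [|n IH]; intros [|k] H; simpl; try lia; auto.
  rewrite !IH; try lia; ring.
Qed.

Lemma binom_ge0 n k : 0 <= binom n k.
Proof.
  revert k; induction n as [|n IH]; intros [|k]; simpl; try lra.
  specialize (IH k) as H1; specialize (IH (S k)) as H2; lra.
Qed.

Lemma binom_C k n : (n <= k)%nat -> binom k n = Binomial.C k n.
Proof.
  assert (C0 : forall k, Binomial.C k 0 = 1).
  { intros j. unfold Binomial.C. rewrite Nat.sub_0_r. simpl. field. apply INR_fact_neq_0. }
  assert (Cn : forall k, Binomial.C k k = 1).
  { intros j. unfold Binomial.C. rewrite Nat.sub_diag. simpl. field. apply INR_fact_neq_0. }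
  revert n; induction k; intros n Hn.
  - replace n with 0%nat by lia. simpl. rewrite C0. reflexivity.
  - destruct n as [|n'].
    + simpl. rewrite C0. reflexivity.
    + simpl. destruct (Nat.eq_dec n' k) as [->|Hne].
      * rewrite (binom_gt k (S k)), IHk, !Cn by lia. ring.
      * rewrite !IHk by lia. apply pascal. lia.
Qed.

(* [fdiff m a n] is [((1 - shift)^n m) a]: for a moment sequence [m k = E[T^k]] it equals
   [E[T^a (1 - T)^n]], which is how nonnegativity and Jensen's inequality enter below. *)
Fixpoint fdiff (m : nat -> R) (a n : nat) : R :=
  match n with
  | O => m a
  | S n' => fdiff m a n' - fdiff m (S a) n'
  end.

Lemma fdiff_ext m1 m2 : (forall k, m1 k = m2 k) -> forall n a, fdiff m1 a n = fdiff m2 a n.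
Proof. intros H n; induction n; intros a; simpl; auto. rewrite !IHn; auto. Qed.

Lemma fdiff_mul m1 m2 n : forall a,
  fdiff (fun k => m1 k * m2 k) a n =
  sum_f_R0 (fun j => binom n j * fdiff m1 a j * fdiff m2 (a + j) (n - j)) n.
Proof.
  induction n as [|n IH]; intros a.
  - simpl. rewrite Nat.add_0_r. ring.
  - simpl fdiff at 1. rewrite !IH.
    rewrite (decomp_sum _ (S n)); [|lia]. simpl pred.
    simpl binom at 1. rewrite Nat.add_0_r, Nat.sub_0_r.
    set (X := sum_f_R0 (fun j => binom n j * fdiff m1 a j * fdiff m2 (S a + j) (n - j)) n).
    transitivity (fdiff m1 a 0 * fdiff m2 a (S n) +
       sum_f_R0 (fun i => binom n (S i) * fdiff m1 a (S i) * fdiff m2 (a + S i) (n - i)) n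
       + (X - sum_f_R0 (fun j => binom n j * fdiff m1 (S a) j * fdiff m2 (S a + j) (n - j)) n)).
    2:{ simpl binom at 1. rewrite Rplus_assoc, Rmult_1_l. f_equal.
      unfold X. rewrite <- minus_sum, <- plus_sum. apply sum_eq. intros i Hi.
      simpl binom. change (fdiff m1 a (S i)) with (fdiff m1 a i - fdiff m1 (S a) i).
      replace (S n - S i)%nat with (n - i)%nat by lia.
      replace (a + S i)%nat with (S a + i)%nat by lia. ring. }
    enough (HY : fdiff m1 a 0 * fdiff m2 a (S n) +
          sum_f_R0 (fun i => binom n (S i) * fdiff m1 a (S i) * fdiff m2 (a + S i) (n - i)) n
        = sum_f_R0 (fun j => binom n j * fdiff m1 a j * fdiff m2 (a + j) (n - j)) n - X)
      by (rewrite HY; unfold X; ring).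
    destruct n as [|n'].
    + simpl. unfold X. simpl. rewrite !Nat.add_0_r. replace (a + 1)%nat with (S a) by lia. ring.
    + rewrite tech5, (binom_gt (S n') (S (S n'))) by lia.
      rewrite Rmult_0_l, Rmult_0_l, Rplus_0_r.
      unfold X. rewrite <- minus_sum, (decomp_sum _ (S n')) by lia. simpl pred.
      simpl binom at 2. rewrite Nat.add_0_r, Nat.sub_0_r.
      change (fdiff m2 a (S (S n'))) with (fdiff m2 a (S n') - fdiff m2 (S a) (S n')).
      replace (sum_f_R0 (fun i => binom (S n') (S i) * fdiff m1 a (S i) * fdiff m2 (a + S i) (S n' - i)) n')
        with (sum_f_R0 (fun i => binom (S n') (S i) * fdiff m1 a (S i) * fdiff m2 (a + S i) (S n' - S i) -
               binom (S n') (S i) * fdiff m1 a (S i) * fdiff m2 (S a + S i) (S n' - S i)) n').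
      * simpl binom. rewrite Nat.add_0_r. ring.
      * apply sum_eq; intros i Hi. replace (S n' - i)%nat with (S (S n' - S i)) by lia.
        replace (a + S i)%nat with (S a + i)%nat by lia.
        change (fdiff m2 (S a + i) (S (S n' - S i)))
          with (fdiff m2 (S a + i) (S n' - S i) - fdiff m2 (S (S a + i)) (S n' - S i)).
        replace (S (S a + i)) with (S a + S i)%nat by lia. ring.
Qed.

Lemma fdiff_geom d a n : fdiff (fun k => d ^ k) a n = d ^ a * (1 - d) ^ n.
Proof. revert a; induction n; intros a; simpl; [ring|]. rewrite !IHn. simpl. ring. Qed.

Lemma fdiff_poch_ratio a b : 0 < a -> a < b -> forall n al,
  fdiff (fun k => poch a k / poch b k) al n = poch a al * poch (b - a) n / poch b (al + n).
Proof.
  intros Ha Hab n; induction n; intros al; simpl fdiff.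
  - rewrite Nat.add_0_r. simpl. field. apply Rgt_not_eq, poch_pos; lra.
  - rewrite !IHn. replace (S al + n)%nat with (al + S n)%nat by lia.
    simpl poch. replace (al + S n)%nat with (S (al + n)) by lia. simpl poch.
    rewrite plus_INR.
    assert (0 < poch b (al + n)) by (apply poch_pos; lra).
    pose proof (pos_INR al); pose proof (pos_INR n).
    field. split; [lra|]. apply Rgt_not_eq; auto.
Qed.

Lemma sum_f_R0_shift f n : f (S n) = 0 ->
  sum_f_R0 (fun i => f (S i)) n = sum_f_R0 f n - f O.
Proof.
  intros H. pose proof (decomp_sum f (S n)) as D. simpl pred in D.
  rewrite tech5, H in D. specialize (D ltac:(lia)). lra.
Qed.

Lemma fdiff_alt_sum m n : forall a,
  fdiff m a n = sum_f_R0 (fun k => binom n k * (-1) ^ k * m (a + k)%nat) n.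
Proof.
  induction n; intros a.
  - simpl. rewrite Nat.add_0_r. ring.
  - simpl fdiff. rewrite !IHn, (decomp_sum _ (S n)) by lia. simpl pred.
    rewrite Nat.add_0_r. simpl binom at 1.
    transitivity (m a + (- sum_f_R0 (fun k => binom n k * (-1) ^ k * m (S a + k)%nat) n
        + sum_f_R0 (fun i => binom n (S i) * (-1) ^ S i * m (a + S i)%nat) n)).
    + rewrite (sum_f_R0_shift (fun k => binom n k * (-1) ^ k * m (a + k)%nat)).
      * rewrite Nat.add_0_r. destruct n; simpl; ring.
      * rewrite binom_gt by lia. ring.
    + rewrite !Rmult_1_l. f_equal.
      transitivity (sum_f_R0 (fun i => (binom n i * (-1) ^ i * m (S a + i)%nat) * (-1)) n +
        sum_f_R0 (fun i => binom n (S i) * (-1) ^ S i * m (a + S i)%nat) n).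
      { rewrite <- scal_sum. ring. }
      rewrite <- plus_sum. apply sum_eq. intros i Hi. simpl binom.
      replace (a + S i)%nat with (S a + i)%nat by lia. simpl pow. ring.
Qed.

Lemma poch_ratio_ge_geom a b : 0 < a -> a < b -> forall j, (a / b) ^ j <= poch a j / poch b j.
Proof.
  intros Ha Hab j; induction j; simpl; [lra|].
  assert (0 < poch b j) by (apply poch_pos; lra).
  pose proof (pos_INR j).
  replace (poch a j * (a + INR j) / (poch b j * (b + INR j)))
    with ((a + INR j) / (b + INR j) * (poch a j / poch b j)) by (field; split; lra).
  apply Rmult_le_compat.
  - apply Rlt_le, Rdiv_lt_0_compat; lra.
  - apply pow_le, Rlt_le, Rdiv_lt_0_compat; lra.
  - enough (0 <= (a + INR j) / (b + INR j) - a / b) by lra.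
    replace ((a + INR j) / (b + INR j) - a / b) with ((b - a) * INR j / (b * (b + INR j)))
      by (field; lra).
    apply Rmult_le_pos; [nra | apply Rlt_le, Rinv_0_lt_compat; nra].
  - exact IHj.
Qed.

Definition poch_ratio_prod (q : nat) (a b : nat -> R) (k : nat) : R :=
  prodR q (fun i => poch (a i) k / poch (b i) k).

Lemma poch_ratio_prod_1 q a b : poch_ratio_prod q a b 1 = prodR q (fun i => a i / b i).
Proof. apply prodR_ext. intros i _. simpl. rewrite !Rmult_1_l, !Rplus_0_r. reflexivity. Qed.

(* In terms of the Beta product [T], the two statements are [E[(dT)^al (1 - dT)^n] >= 0] and
   Jensen's [E[(1 - dT)^n] >= (1 - E[dT])^n]; the induction on [q] peels off one Beta factor
   with Leibniz' rule [fdiff_mul], and the scaling [d] is what makes this induction go through. *)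
Lemma fdiff_scaled_poch_ratio_prod (a b : nat -> R) q :
  (forall i, (i < q)%nat -> 0 < a i < b i) -> forall d, 0 <= d <= 1 ->
  (forall al n, 0 <= fdiff (fun k => d ^ k * poch_ratio_prod q a b k) al n) /\
  (forall n, (1 - d * poch_ratio_prod q a b 1) ^ n <=
             fdiff (fun k => d ^ k * poch_ratio_prod q a b k) 0 n).
Proof.
  unfold poch_ratio_prod. induction q as [|q IH]; intros Hab d Hd;
    set (m := fun k => d ^ k * prodR _ (fun i => poch (a i) k / poch (b i) k));
    replace (d * prodR _ (fun i => poch (a i) 1 / poch (b i) 1)) with (m 1%nat)
      by (unfold m; ring).
  - assert (E : forall al n, fdiff m al n = d ^ al * (1 - d) ^ n).
    { intros al n. rewrite <- fdiff_geom. apply fdiff_ext. intros k. unfold m; simpl; ring. }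
    split.
    + intros al n. rewrite E. apply Rmult_le_pos; apply pow_le; lra.
    + intros n. rewrite E. unfold m. simpl. rewrite !Rmult_1_r, Rmult_1_l. lra.
  - destruct (Hab q ltac:(lia)) as [Ha Hb].
    assert (Hab' : forall i, (i < q)%nat -> 0 < a i < b i) by (intros; apply Hab; lia).
    set (be := fun k => poch (a q) k / poch (b q) k).
    set (c := a q / b q).
    assert (Hc : 0 < c < 1).
    { unfold c; split; [apply Rdiv_lt_0_compat; lra|].
      apply (Rmult_lt_reg_r (b q)); [lra|]. unfold Rdiv; rewrite Rmult_assoc, Rinv_l; lra. }
    assert (E : forall al n, fdiff m al n =
       fdiff (fun k => be k * (d ^ k * prodR q (fun i => poch (a i) k / poch (b i) k))) al n).
    { intros; apply fdiff_ext; intros k; unfold m, be; simpl; ring. }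
    assert (Hbe : forall al j, 0 <= fdiff be al j).
    { intros al j. unfold be. rewrite fdiff_poch_ratio by lra.
      pose proof (poch_pos (a q) al Ha). pose proof (poch_pos (b q - a q) j ltac:(lra)).
      pose proof (poch_pos (b q) (al + j) ltac:(lra)).
      apply Rlt_le, Rdiv_lt_0_compat; [apply Rmult_lt_0_compat|]; lra. }
    destruct (IH Hab' d Hd) as [Pos Jen].
    split.
    + intros al n. rewrite E, fdiff_mul. apply sum_f_R0_nonneg. intros j Hj.
      apply Rmult_le_pos; [apply Rmult_le_pos|]; auto using binom_ge0.
    + intros n. rewrite E, fdiff_mul.
      assert (Hcd : 0 <= c * d <= 1) by nra.
      destruct (IH Hab' (c * d) Hcd) as [_ Jen2].
      apply Rle_trans with
        (fdiff (fun k => (c * d) ^ k * prodR q (fun i => poch (a i) k / poch (b i) k)) 0 n).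
      * replace (m 1%nat) with (c * d * prodR q (fun i => poch (a i) 1 / poch (b i) 1)).
        -- apply Jen2.
        -- unfold m, c. simpl. rewrite !Rmult_1_r. field. lra.
      * rewrite (fdiff_ext _ (fun k => c ^ k * (d ^ k * prodR q (fun i => poch (a i) k / poch (b i) k))))
          by (intros k; rewrite Rpow_mult_distr; ring).
        rewrite fdiff_mul. apply sum_Rle. intros j Hj.
        rewrite fdiff_geom. apply Rmult_le_compat_r; [apply Pos|].
        apply Rmult_le_compat_l; [apply binom_ge0|].
        unfold be. rewrite fdiff_poch_ratio by lra. simpl. rewrite !Rmult_1_l.
        replace (1 - c) with ((b q - a q) / b q) by (unfold c; field; lra).
        apply poch_ratio_ge_geom; lra.
Qed.

Definition neg_binom_coef (be : R) (j : nat) : R := poch be j / INR (fact j).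

Lemma neg_binom_coef_pos be j : 0 < be -> 0 < neg_binom_coef be j.
Proof. intros H. apply Rdiv_lt_0_compat; [apply poch_pos; auto | apply INR_fact_lt_0]. Qed.

Lemma neg_binom_coef_ratio be n : 0 < be ->
  neg_binom_coef be (S n) / neg_binom_coef be n = (be + INR n) / INR (S n).
Proof.
  intros Hb. unfold neg_binom_coef. simpl poch. rewrite fact_simpl, mult_INR.
  pose proof (poch_pos be n Hb). pose proof (INR_fact_lt_0 n).
  assert (0 < INR (S n)) by (apply lt_0_INR; lia).
  field. repeat split; lra.
Qed.

Lemma CV_radius_neg_binom_coef be : 0 < be -> CV_radius (neg_binom_coef be) = 1.
Proof.
  intros Hb. replace (Finite 1) with (Finite (/ 1)) by (f_equal; lra).
  apply CV_radius_finite_DAlembert; [|lra|].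
  { intros n. apply Rgt_not_eq, neg_binom_coef_pos; auto. }
  apply is_lim_seq_ext with (fun n => 1 + (be - 1) * / INR (S n)).
  { intros n. rewrite neg_binom_coef_ratio, S_INR by auto.
    pose proof (pos_INR n). rewrite Rabs_pos_eq.
    - field; lra.
    - apply Rlt_le, Rdiv_lt_0_compat; lra. }
  replace (Finite 1) with (Finite (1 + (be - 1) * 0)) by (f_equal; ring).
  apply is_lim_seq_plus'; [apply is_lim_seq_const|].
  apply is_lim_seq_mult'; [apply is_lim_seq_const|].
  apply (is_lim_seq_inv _ p_infty); [|discriminate].
  apply (is_lim_seq_incr_1 INR). apply is_lim_seq_INR.
Qed.

Lemma neg_binom_ode be u : 0 < be -> Rabs u < 1 ->
  (1 - u) * PSeries (PS_derive (neg_binom_coef be)) u = be * PSeries (neg_binom_coef be) u.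
Proof.
  intros Hb Hu.
  assert (Hr : Rbar_lt (Rabs u) (CV_radius (neg_binom_coef be)))
    by (rewrite CV_radius_neg_binom_coef; simpl; auto).
  assert (HD : is_pseries (PS_derive (neg_binom_coef be)) u
                 (PSeries (PS_derive (neg_binom_coef be)) u)).
  { apply PSeries_correct, CV_radius_inside. rewrite CV_radius_derive. auto. }
  assert (HS : is_pseries (neg_binom_coef be) u (PSeries (neg_binom_coef be) u))
    by (apply PSeries_correct, CV_radius_inside; auto).
  pose proof (is_pseries_incr_1 _ _ _ HD) as H1.
  pose proof (is_pseries_scal be _ _ _ ltac:(apply Rmult_comm) HS) as H2.
  pose proof (is_pseries_plus _ _ _ _ _ H2 H1) as H3.
  assert (H4 : is_pseries (PS_derive (neg_binom_coef be)) u
     (plus (scal be (PSeries (neg_binom_coef be) u))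
           (scal u (PSeries (PS_derive (neg_binom_coef be)) u)))).
  { eapply is_pseries_ext; [|exact H3].
    intros n. unfold PS_plus, PS_scal, PS_incr_1, PS_derive. destruct n.
    - change (be * (1 / 1) + 0 = 1 * ((1 * (be + 0)) / 1)). field.
    - change (be * neg_binom_coef be (S n) + INR (S n) * neg_binom_coef be (S n)
              = INR (S (S n)) * neg_binom_coef be (S (S n))).
      unfold neg_binom_coef.
      change (poch be (S (S n))) with (poch be (S n) * (be + INR (S n))).
      rewrite (fact_simpl (S n)), mult_INR, (S_INR (S n)).
      pose proof (INR_fact_lt_0 (S n)). pose proof (pos_INR (S n)).
      field. lra. }
  pose proof (is_pseries_unique _ _ _ H4) as E.
  unfold plus, scal in E; simpl in E; unfold mult in E; simpl in E.
  lra.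
Qed.

Lemma Rpower_1_l y : Rpower 1 y = 1.
Proof. unfold Rpower. rewrite ln_1, Rmult_0_r, exp_0. reflexivity. Qed.

Lemma is_derive_Rpower_one_minus be u : u < 1 ->
  is_derive (fun u => Rpower (1 - u) be) u (- be * Rpower (1 - u) (be - 1)).
Proof.
  intros Hu. unfold Rpower.
  auto_derive; [lra|].
  replace (be - 1) with (be + - 1) by ring.
  rewrite Rmult_plus_distr_r, exp_plus.
  replace (-1 * ln (1 - u)) with (- ln (1 - u)) by ring. rewrite exp_Ropp, exp_ln by lra.
  replace (1 + - u) with (1 - u) by ring. field. lra.
Qed.

(* The power series solves [(1 - u) y' = be y], so [y(u) (1 - u)^be] has zero derivative. *)
Lemma is_pseries_neg_binom be u : 0 < be -> Rabs u < 1 ->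
  is_pseries (neg_binom_coef be) u (Rpower (1 - u) (- be)).
Proof.
  intros Hb Hu.
  assert (Hr : forall v, Rabs v < 1 -> Rbar_lt (Rabs v) (CV_radius (neg_binom_coef be)))
    by (intros; rewrite CV_radius_neg_binom_coef; simpl; auto).
  set (g := fun v => PSeries (neg_binom_coef be) v * Rpower (1 - v) be).
  assert (Hg : forall v, Rabs v < 1 -> is_derive g v 0).
  { intros v Hv. unfold g.
    assert (Hv1 : v < 1) by (apply Rabs_def2 in Hv; lra).
    replace 0 with (PSeries (PS_derive (neg_binom_coef be)) v * Rpower (1 - v) be +
         PSeries (neg_binom_coef be) v * (- be * Rpower (1 - v) (be - 1))).
    - apply (is_derive_mult (PSeries (neg_binom_coef be)) (fun u => Rpower (1 - u) be)).
      + apply is_derive_PSeries; auto.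
      + apply is_derive_Rpower_one_minus; auto.
      + intros; apply Rmult_comm.
    - replace (Rpower (1 - v) be) with ((1 - v) * Rpower (1 - v) (be - 1)).
      + replace (PSeries (PS_derive (neg_binom_coef be)) v * ((1 - v) * Rpower (1 - v) (be - 1)))
          with (((1 - v) * PSeries (PS_derive (neg_binom_coef be)) v) * Rpower (1 - v) (be - 1))
          by ring.
        rewrite neg_binom_ode by auto. ring.
      + replace be with (1 + (be - 1)) at 2 by ring. rewrite Rpower_plus, Rpower_1 by lra. ring. }
  assert (Hseg : forall x, Rmin 0 u <= x <= Rmax 0 u -> Rabs x < 1).
  { intros x Hx. apply Rabs_def2 in Hu. apply Rabs_def1.
    - apply Rle_lt_trans with (Rmax 0 u); [lra|]. apply Rmax_lub_lt; lra.
    - apply Rlt_le_trans with (Rmin 0 u); [|lra]. apply Rmin_glb_lt; lra. }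
  assert (Hgu : g u = g 0).
  { destruct (MVT_gen g 0 u (fun _ => 0)) as [c [Hc E]].
    - intros x Hx. apply Hg, Hseg. lra.
    - intros x Hx. apply continuity_pt_filterlim.
      apply (@ex_derive_continuous R_AbsRing R_NormedModule g x).
      eexists. apply Hg, Hseg. exact Hx.
    - lra. }
  unfold g in Hgu. rewrite PSeries_0, Rminus_0_r, Rpower_1_l in Hgu.
  replace (neg_binom_coef be 0) with 1 in Hgu by (unfold neg_binom_coef; simpl; field).
  assert (Hpos : 0 < Rpower (1 - u) be) by (unfold Rpower; apply exp_pos).
  replace (Rpower (1 - u) (- be)) with (PSeries (neg_binom_coef be) u).
  - apply PSeries_correct, CV_radius_inside. auto.
  - rewrite Rpower_Ropp. apply (Rmult_eq_reg_r (Rpower (1 - u) be)); [|lra].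
    rewrite Hgu. field. lra.
Qed.

Lemma is_series_partial_sums (a : nat -> R) (l : R) :
  is_series a l <-> is_lim_seq (sum_f_R0 a) l.
Proof. rewrite is_series_Reals, is_lim_seq_Reals. reflexivity. Qed.

Lemma is_series_mult_l (k : R) (a : nat -> R) l :
  is_series a l -> is_series (fun n => k * a n) (k * l).
Proof.
  intros H. rewrite (Rmult_comm k l).
  eapply is_series_ext; [|exact (is_series_scal_r k a l H)]. intros n. apply Rmult_comm.
Qed.

Lemma is_series_partial_le (u : nat -> R) l N :
  (forall n, 0 <= u n) -> is_series u l -> sum_f_R0 u N <= l.
Proof.
  intros Hp H. apply is_series_partial_sums, (is_lim_seq_incr_n _ N l) in H.
  assert (Hle : forall M, sum_f_R0 u N <= sum_f_R0 u (M + N)).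
  { induction M; simpl; [lra|]. specialize (Hp (S (M + N))). lra. }
  exact (is_lim_seq_le _ _ _ _ Hle (is_lim_seq_const _) H).
Qed.

Lemma is_series_lt (u v : nat -> R) lu lv :
  is_series u lu -> is_series v lv -> (forall n, u n <= v n) -> u 2%nat < v 2%nat -> lu < lv.
Proof.
  intros Hu Hv Hle Hlt.
  pose proof (is_series_partial_le (fun n => v n - u n) (lv - lu) 2
    ltac:(intros n; specialize (Hle n); lra) (is_series_minus _ _ _ _ Hv Hu)) as P.
  simpl in P. pose proof (Hle 0%nat). pose proof (Hle 1%nat). lra.
Qed.

Lemma Rabs_sum_f_R0_incr_le (a : nat -> R) m M :
  Rabs (sum_f_R0 a (M + m) - sum_f_R0 a m) <=
  sum_f_R0 (fun j => Rabs (a j)) (M + m) - sum_f_R0 (fun j => Rabs (a j)) m.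
Proof.
  induction M; simpl.
  - rewrite !Rminus_diag, Rabs_R0. lra.
  - replace (sum_f_R0 a (M + m) + a (S (M + m)) - sum_f_R0 a m)
      with ((sum_f_R0 a (M + m) - sum_f_R0 a m) + a (S (M + m))) by ring.
    eapply Rle_trans; [apply Rabs_triang|]. lra.
Qed.

Lemma is_series_tail_abs_le (a : nat -> R) (l la : R) m :
  is_series a l -> is_series (fun j => Rabs (a j)) la ->
  Rabs (l - sum_f_R0 a m) <= la - sum_f_R0 (fun j => Rabs (a j)) m.
Proof.
  intros H1 H2. apply is_series_partial_sums, (is_lim_seq_incr_n _ m) in H1.
  apply is_series_partial_sums, (is_lim_seq_incr_n _ m) in H2.
  refine (is_lim_seq_le _ _ (Rabs (l - sum_f_R0 a m)) (la - _)
    (fun M => Rabs_sum_f_R0_incr_le a m M) _ _).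
  - apply (is_lim_seq_abs _ (Finite (l - sum_f_R0 a m))).
    apply is_lim_seq_minus'; [exact H1 | apply is_lim_seq_const].
  - apply is_lim_seq_minus'; [exact H2 | apply is_lim_seq_const].
Qed.

Lemma sum_f_R0_antidiag (a : nat -> nat -> R) K :
  sum_f_R0 (fun k => sum_f_R0 (fun n => a n (k - n)%nat) k) K =
  sum_f_R0 (fun n => sum_f_R0 (a n) (K - n)) K.
Proof.
  induction K; [reflexivity|].
  rewrite tech5, IHK. cbv beta. rewrite !tech5, Nat.sub_diag, <- Rplus_assoc. f_equal.
  rewrite <- plus_sum. apply sum_eq. intros n Hn.
  replace (S K - n)%nat with (S (K - n)) by lia. reflexivity.
Qed.

Lemma eventually_uniform_le (P : nat -> nat -> Prop) :
  (forall n, exists M, forall m, (m >= M)%nat -> P n m) ->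
  forall N, exists M, forall n m, (n <= N)%nat -> (m >= M)%nat -> P n m.
Proof.
  intros H N. induction N.
  - destruct (H 0%nat) as [M HM]. exists M. intros n m Hn Hm. replace n with 0%nat by lia. auto.
  - destruct IHN as [M1 H1]. destruct (H (S N)) as [M2 H2]. exists (Nat.max M1 M2).
    intros n m Hn Hm. destruct (Nat.eq_dec n (S N)) as [->|Hne].
    + apply H2; lia.
    + apply H1; lia.
Qed.

Lemma is_series_antidiag (a : nat -> nat -> R) (r ra : nat -> R) (l SA : R) :
  (forall n, is_series (a n) (r n)) ->
  (forall n, is_series (fun j => Rabs (a n j)) (ra n)) ->
  is_series ra SA -> is_series r l ->
  is_series (fun k => sum_f_R0 (fun n => a n (k - n)%nat) k) l.
Proof.
  intros Hr Hra HSA Hl.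
  set (t := fun n m => ra n - sum_f_R0 (fun j => Rabs (a n j)) m).
  assert (Ht1 : forall n m, Rabs (r n - sum_f_R0 (a n) m) <= t n m)
    by (intros; apply is_series_tail_abs_le; auto).
  assert (Hsa : forall n m, 0 <= sum_f_R0 (fun j => Rabs (a n j)) m)
    by (intros; apply sum_f_R0_nonneg; intros; apply Rabs_pos).
  assert (Ht2 : forall n m, t n m <= ra n) by (intros; unfold t; specialize (Hsa n m); lra).
  assert (Hra0 : forall n, 0 <= ra n).
  { intros n. specialize (Ht1 n 0%nat). specialize (Hsa n 0%nat).
    pose proof (Rabs_pos (r n - sum_f_R0 (a n) 0)). unfold t in Ht1. lra. }
  assert (Ht3 : forall n, is_lim_seq (t n) 0).
  { intros n. unfold t. replace (Finite 0) with (Finite (ra n - ra n)) by (f_equal; ring).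
    apply is_lim_seq_minus'; [apply is_lim_seq_const|]. apply is_series_partial_sums, Hra. }
  apply is_series_partial_sums, is_lim_seq_Reals. intros eps Heps.
  set (e3 := eps / 3).
  assert (He3 : 0 < e3) by (unfold e3; lra).
  apply is_series_partial_sums, is_lim_seq_Reals in Hl.
  destruct (Hl e3 He3) as [N1 HN1].
  destruct (proj1 (is_lim_seq_Reals _ _) (proj1 (is_series_partial_sums _ _) HSA) e3 He3)
    as [N HN].
  assert (HN' : SA - sum_f_R0 ra N < e3).
  { specialize (HN N ltac:(lia)). unfold Rdist in HN. apply Rabs_def2 in HN. lra. }
  set (e4 := e3 / INR (S N)).
  assert (He4 : 0 < e4) by (unfold e4; apply Rdiv_lt_0_compat; [lra | apply lt_0_INR; lia]).
  destruct (eventually_uniform_le (fun n m => t n m < e4)) with N as [M HM].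
  { intros n. pose proof (Ht3 n) as L. apply is_lim_seq_Reals in L.
    destruct (L e4 He4) as [M HM]. exists M. intros m Hm.
    specialize (HM m Hm). unfold Rdist in HM. apply Rabs_def2 in HM. lra. }
  exists (Nat.max N1 (S (N + M))). intros K HK.
  unfold Rdist. rewrite sum_f_R0_antidiag.
  assert (A1 : Rabs (sum_f_R0 r K - l) < e3) by (apply HN1; lia).
  assert (A2 : Rabs (sum_f_R0 (fun n => sum_f_R0 (a n) (K - n)) K - sum_f_R0 r K) <=
               sum_f_R0 (fun n => t n (K - n)%nat) K).
  { rewrite <- minus_sum. eapply Rle_trans; [apply sum_f_R0_triangle|]. apply sum_Rle.
    intros n Hn. rewrite <- Rabs_Ropp, Ropp_minus_distr. apply Ht1. }
  (* Rows [n <= N] are within [e4] of their sums; the remaining rows weigh less than [e3]. *)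
  assert (A3 : sum_f_R0 (fun n => t n (K - n)%nat) K < 2 * e3).
  { rewrite (tech2 _ N K) by lia.
    assert (B1 : sum_f_R0 (fun n => t n (K - n)%nat) N <= e3).
    { apply Rle_trans with (sum_f_R0 (fun _ => e4) N).
      - apply sum_Rle. intros n Hn. left. apply HM; lia.
      - rewrite sum_cte. unfold e4. right. field. apply Rgt_not_eq, lt_0_INR; lia. }
    assert (B2 : sum_f_R0 (fun i => t (S N + i)%nat (K - (S N + i))%nat) (K - S N)
                 <= sum_f_R0 ra K - sum_f_R0 ra N).
    { rewrite (tech2 ra N K) by lia.
      apply Rle_trans with (sum_f_R0 (fun i => ra (S N + i)%nat) (K - S N)); [|lra].
      apply sum_Rle. intros; apply Ht2. }
    assert (B3 : sum_f_R0 ra K <= SA) by (apply is_series_partial_le; auto).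
    lra. }
  replace (sum_f_R0 (fun n => sum_f_R0 (a n) (K - n)) K - l) with
    ((sum_f_R0 (fun n => sum_f_R0 (a n) (K - n)) K - sum_f_R0 r K) + (sum_f_R0 r K - l)) by ring.
  eapply Rle_lt_trans; [apply Rabs_triang|]. unfold e3 in *. lra.
Qed.

Lemma Rbar_lt_CV_radius (c : nat -> R) r x :
  (forall y, Rabs y < r -> ex_pseries c y) -> Rabs x < r -> Rbar_lt (Rabs x) (CV_radius c).
Proof.
  intros H Hx.
  set (x' := (Rabs x + r) / 2).
  assert (Hx' : Rabs x < x' < r) by (unfold x'; lra).
  assert (Hle : Rbar_le x' (CV_radius c)).
  { apply Rbar_not_lt_le. intros Hlt.
    assert (Hx'0 : 0 <= x') by (pose proof (Rabs_pos x); lra).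
    apply (CV_disk_outside c x'). { rewrite Rabs_pos_eq by lra. exact Hlt. }
    apply ex_series_lim_0. destruct (H x') as [l Hl]. { rewrite Rabs_pos_eq; lra. }
    exists l. apply is_pseries_R in Hl. exact Hl. }
  destruct (CV_radius c) as [R| |]; simpl in *; auto; lra.
Qed.

Definition analytic_at (G : R -> R) (w0 : R) : Prop :=
  exists rho, 0 < rho /\ exists e : nat -> R,
    forall w, Rabs (w - w0) < rho -> is_pseries e (w - w0) (G w).

Section LocalPowerSeries.

Variables (G : R -> R) (w0 rho : R) (e : nat -> R).
Hypothesis Hrho : 0 < rho.
Hypothesis He : forall w, Rabs (w - w0) < rho -> is_pseries e (w - w0) (G w).

Lemma CV_radius_local y : Rabs y < rho -> Rbar_lt (Rabs y) (CV_radius e).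
Proof.
  intros Hy. apply (Rbar_lt_CV_radius e rho); [|exact Hy]. intros y' Hy'. exists (G (y' + w0)).
  pose proof (He (y' + w0)) as H. replace (y' + w0 - w0) with y' in H by ring. exact (H Hy').
Qed.

Lemma Derive_n_local k h : Rabs h < rho -> Derive_n G k (w0 + h) = PSeries (PS_derive_n k e) h.
Proof.
  intros Hh.
  rewrite (Derive_n_ext_loc G (fun t => PSeries e (t + - w0))).
  - rewrite Derive_n_comp_trans. replace (w0 + h + - w0) with h by ring.
    apply Derive_n_PSeries, CV_radius_local, Hh.
  - assert (Hd : 0 < rho - Rabs h) by lra.
    exists (mkposreal _ Hd). intros y Hy. change (Rabs (y - (w0 + h)) < rho - Rabs h) in Hy.
    symmetry. apply is_pseries_unique, He.
    replace (y - w0) with ((y - (w0 + h)) + h) by ring.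
    eapply Rle_lt_trans; [apply Rabs_triang|]. lra.
Qed.

Lemma Derive_n_center k : Derive_n G k w0 = e k * INR (fact k).
Proof.
  assert (Hr : Rbar_lt (Rabs 0) (CV_radius e)) by (apply CV_radius_local; rewrite Rabs_R0; lra).
  pose proof (Derive_n_local k 0 ltac:(rewrite Rabs_R0; lra)) as E.
  rewrite Rplus_0_r in E. rewrite E, <- (Derive_n_PSeries k e 0) by auto.
  rewrite Rabs_R0 in Hr. apply Derive_n_coef. exact Hr.
Qed.

Lemma is_series_Derive_n_taylor k h : Rabs h < rho ->
  is_series (fun j => Derive_n G (k + j) w0 * h ^ j / INR (fact j)) (Derive_n G k (w0 + h)).
Proof.
  intros Hh. rewrite (Derive_n_local k h Hh).
  assert (Hk : Rbar_lt (Rabs h) (CV_radius (PS_derive_n k e)))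
    by (rewrite CV_radius_derive_n; apply CV_radius_local; auto).
  pose proof (PSeries_correct _ _ (CV_radius_inside _ _ Hk)) as P. apply is_pseries_R in P.
  eapply is_series_ext; [|exact P].
  intros j. rewrite Derive_n_center. unfold PS_derive_n. rewrite (Nat.add_comm j k).
  pose proof (INR_fact_neq_0 j).
  change (INR (fact (k + j)) / INR (fact j) * e (k + j)%nat * h ^ j
          = e (k + j)%nat * INR (fact (k + j)) * h ^ j / INR (fact j)).
  field. auto.
Qed.

Lemma continuity_pt_Derive_n k : continuity_pt (Derive_n G k) w0.
Proof.
  apply (continuity_pt_locally_ext (fun t => PSeries (PS_derive_n k e) (t - w0)) _ rho); auto.
  - intros y Hy. unfold Rdist in Hy. rewrite <- (Derive_n_local k (y - w0) Hy).
    f_equal. ring.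
  - apply (continuity_pt_comp (fun t => t - w0) (PSeries (PS_derive_n k e))).
    + apply continuity_pt_minus; [apply continuity_pt_id | apply continuity_pt_const; intros ? ?; auto].
    + apply PSeries_continuity. rewrite CV_radius_derive_n. apply CV_radius_local.
      replace (w0 - w0) with 0 by ring. rewrite Rabs_R0. auto.
Qed.

End LocalPowerSeries.

Lemma Rpower_opp_plus_INR x s n : 0 < x -> Rpower x (- (s + INR n)) = Rpower x (- s) * / x ^ n.
Proof.
  intros Hx. replace (- (s + INR n)) with (- s + - INR n) by ring.
  rewrite Rpower_plus, (Rpower_Ropp x (INR n)), Rpower_pow by auto. reflexivity.
Qed.

Lemma is_series_neg_binom_shifted s n t u : 0 < s -> Rabs u < 1 ->
  is_series (fun j => t ^ n * (neg_binom_coef (s + INR n) j * u ^ j))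
            (Rpower (1 - u) (- s) * (t / (1 - u)) ^ n).
Proof.
  intros Hs Hu.
  assert (Hu1 : 0 < 1 - u) by (apply Rabs_def2 in Hu; lra).
  replace (Rpower (1 - u) (- s) * (t / (1 - u)) ^ n)
    with (t ^ n * Rpower (1 - u) (- (s + INR n))).
  - apply is_series_mult_l, is_pseries_R, is_pseries_neg_binom; auto.
    pose proof (pos_INR n). lra.
  - rewrite Rpower_opp_plus_INR by auto. unfold Rdiv. rewrite Rpow_mult_distr, pow_inv. ring.
Qed.

(* Substituting [v = t / (1 - u)] into [sum c n v^n], times [(1 - u)^-s], as a power series in
   [(t, u)] summed by total degree in [u]; [sv] majorizes [|v|] and makes the rearrangement legal. *)
Lemma is_series_neg_binom_subst s (c : nat -> R) t u sv l : 0 < s -> Rabs u < 1 ->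
  sv = Rabs t / (1 - Rabs u) -> ex_series (fun n => Rabs (c n * sv ^ n)) ->
  is_series (fun n => c n * (t / (1 - u)) ^ n) l ->
  is_series (fun k => sum_f_R0
               (fun n => c n * (t ^ n * (neg_binom_coef (s + INR n) (k - n) * u ^ (k - n)))) k)
            (Rpower (1 - u) (- s) * l).
Proof.
  intros Hs Hu Hsv [SA HSA] Hl.
  assert (Hau : Rabs (Rabs u) < 1) by (rewrite Rabs_Rabsolu; lra).
  assert (Hsv0 : 0 <= sv).
  { rewrite Hsv. apply Rmult_le_pos; [apply Rabs_pos | left; apply Rinv_0_lt_compat; lra]. }
  set (a := fun n j => c n * (t ^ n * (neg_binom_coef (s + INR n) j * u ^ j))).
  apply (is_series_antidiag a (fun n => Rpower (1 - u) (- s) * (c n * (t / (1 - u)) ^ n))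
           (fun n => Rpower (1 - Rabs u) (- s) * Rabs (c n * sv ^ n)) _
           (Rpower (1 - Rabs u) (- s) * SA)).
  - intros n. replace (Rpower (1 - u) (- s) * (c n * (t / (1 - u)) ^ n))
      with (c n * (Rpower (1 - u) (- s) * (t / (1 - u)) ^ n)) by ring.
    apply is_series_mult_l, is_series_neg_binom_shifted; auto.
  - intros n. rewrite Rabs_mult, (Rabs_pos_eq (sv ^ n)), Hsv by (apply pow_le; lra).
    replace (Rpower (1 - Rabs u) (- s) * (Rabs (c n) * (Rabs t / (1 - Rabs u)) ^ n))
      with (Rabs (c n) * (Rpower (1 - Rabs u) (- s) * (Rabs t / (1 - Rabs u)) ^ n)) by ring.
    eapply is_series_ext; [|apply is_series_mult_l, is_series_neg_binom_shifted; auto].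
    intros j. unfold a. cbv beta.
    rewrite !Rabs_mult, <- !RPow_abs, (Rabs_pos_eq (neg_binom_coef _ _)); [reflexivity|].
    apply Rlt_le, neg_binom_coef_pos. pose proof (pos_INR n). lra.
  - apply is_series_mult_l. exact HSA.
  - apply is_series_mult_l. exact Hl.
Qed.

Lemma pow_antidiag_identity (d A : R) n m : A <> 0 ->
  (- d / (A * A)) ^ n * (d / A) ^ m = (-1) ^ n / A ^ (n + (n + m)) * d ^ (n + m).
Proof.
  intros HA. unfold Rdiv.
  replace (- d * / (A * A)) with ((-1) * d * / A * / A) by (field; auto).
  rewrite <- (pow_inv A (n + (n + m))), !Rpow_mult_distr, !pow_add. ring.
Qed.

(* Pfaff's transformation; it maps the hypergeometric series with coefficients
   [poch s n * m n / n!] to the one with coefficients [poch s k * fdiff m 0 k / k!]. *)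
Definition pfaff (s : R) (F : R -> R) (w : R) : R := Rpower (1 - w) (- s) * F (w / (w - 1)).

(* Taylor coefficients of [pfaff s F] at [w0 = z0 / (z0 - 1)], with [A = 1 - w0], obtained by
   expanding [(1 - w)^-s = A^-s (1 - (w - w0)/A)^-s] and [F] around [z0]. *)
Definition pfaff_coef (s : R) (c : nat -> R) (A : R) (k : nat) : R :=
  Rpower A (- s) *
  sum_f_R0 (fun n => c n * ((-1) ^ n / A ^ (n + k)) * neg_binom_coef (s + INR n) (k - n)) k.

Lemma is_pseries_pfaff (s : R) (F : R -> R) (z0 r : R) (c : nat -> R) :
  0 < s -> z0 < 1 -> 0 < r ->
  (forall z, Rabs (z - z0) < r -> is_pseries c (z - z0) (F z)) ->
  exists rho, 0 < rho /\ forall w, Rabs (w - z0 / (z0 - 1)) < rho ->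
    is_pseries (pfaff_coef s c (1 - z0 / (z0 - 1))) (w - z0 / (z0 - 1)) (pfaff s F w).
Proof.
  intros Hs Hz0 Hr HF.
  set (w0 := z0 / (z0 - 1)). set (A := 1 - w0).
  assert (HAe : A = / (1 - z0)) by (unfold A, w0; field; lra).
  assert (HA : 0 < A) by (rewrite HAe; apply Rinv_0_lt_compat; lra).
  exists (Rmin (A / 2) (A * A * r / 4)). split.
  { apply Rmin_glb_lt; [lra|]. apply Rdiv_lt_0_compat; [|lra]. apply Rmult_lt_0_compat; nra. }
  intros w Hw. set (d := w - w0).
  assert (Hd1 : Rabs d < A / 2) by (apply Rlt_le_trans with (1 := Hw); apply Rmin_l).
  assert (Hd2 : Rabs d < A * A * r / 4) by (apply Rlt_le_trans with (1 := Hw); apply Rmin_r).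
  set (u := d / A). set (t := - d / (A * A)). set (v := t / (1 - u)).
  assert (Hu : Rabs u < / 2).
  { unfold u. rewrite Rabs_div, (Rabs_pos_eq A) by lra. apply Rmult_lt_reg_r with A; [lra|].
    unfold Rdiv. rewrite Rmult_assoc, Rinv_l by lra. lra. }
  assert (Hu2 : 0 < 1 - u) by (apply Rabs_def2 in Hu; lra).
  assert (Hz : w / (w - 1) = v + z0).
  { assert (Ew : w = 1 - A + d) by (unfold d, A; ring).
    assert (Ez : z0 = 1 - / A) by (rewrite HAe; field; lra).
    assert (d - A < 0) by (apply Rabs_def2 in Hd1; lra).
    rewrite Ew. unfold v, t, u. rewrite Ez. field. repeat split; lra. }
  set (sv := Rabs t / (1 - Rabs u)).
  assert (Hsv : 0 <= sv < r).
  { assert (Habs_t : Rabs t = Rabs d / (A * A)).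
    { unfold t, Rdiv. rewrite Rabs_mult, Rabs_Ropp, Rabs_inv, (Rabs_pos_eq (A * A)) by nra.
      reflexivity. }
    unfold sv. rewrite Habs_t.
    assert (/ (1 - Rabs u) <= 2).
    { replace 2 with (/ / 2) by field. apply Rinv_le_contravar; lra. }
    assert (0 <= Rabs d / (A * A))
      by (apply Rmult_le_pos; [apply Rabs_pos | left; apply Rinv_0_lt_compat; nra]).
    assert (Rabs d / (A * A) < r / 4).
    { apply Rmult_lt_reg_r with (A * A); [nra|]. unfold Rdiv.
      rewrite Rmult_assoc, Rinv_l by nra. lra. }
    split; unfold Rdiv at 1; [apply Rmult_le_pos; [lra | left; apply Rinv_0_lt_compat; lra]|nra]. }
  assert (Hv : Rabs v <= sv).
  { unfold v, sv, Rdiv. rewrite Rabs_mult, Rabs_inv, (Rabs_pos_eq (1 - u)) by lra.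
    apply Rmult_le_compat_l; [apply Rabs_pos|].
    apply Rinv_le_contravar; [lra|]. pose proof (Rle_abs u). lra. }
  assert (HFv : is_series (fun n => c n * v ^ n) (F (v + z0))).
  { apply is_pseries_R. pose proof (HF (v + z0)) as H.
    replace (v + z0 - z0) with v in H by ring. apply H. lra. }
  assert (Hmaj : ex_series (fun n => Rabs (c n * sv ^ n))).
  { apply CV_disk_inside, (CV_radius_local F z0 r c HF). rewrite Rabs_pos_eq; lra. }
  pose proof (is_series_neg_binom_subst s c t u sv _ Hs ltac:(lra) eq_refl Hmaj HFv) as Hsub.
  apply is_pseries_R.
  replace (pfaff s F w) with (Rpower A (- s) * (Rpower (1 - u) (- s) * F (v + z0))).
  2:{ unfold pfaff. rewrite <- Rmult_assoc, Rpower_mult_distr, Hz by lra.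
      do 2 f_equal. unfold u, d. field_simplify; [unfold A; ring | lra]. }
  eapply is_series_ext; [|apply is_series_mult_l; exact Hsub].
  intros k. unfold pfaff_coef. rewrite Rmult_assoc. f_equal.
  rewrite Rmult_comm, scal_sum. apply sum_eq. intros n Hn. unfold u, t.
  pose proof (pow_antidiag_identity d A n (k - n) ltac:(lra)) as PH.
  replace (n + (n + (k - n)))%nat with (n + k)%nat in PH by lia.
  replace (n + (k - n))%nat with k in PH by lia.
  transitivity (c n * neg_binom_coef (s + INR n) (k - n) *
                ((- d / (A * A)) ^ n * (d / A) ^ (k - n))); [ring|].
  rewrite PH. ring.
Qed.

(* The [k]-th derivative of [w |-> (1 - (1 - c) w)^-s]. *)
Definition K_deriv (s c : R) (k : nat) (w : R) : R :=
  poch s k * (1 - c) ^ k * Rpower (1 - (1 - c) * w) (- (s + INR k)).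

Lemma K_deriv_0 s c k : K_deriv s c k 0 = poch s k * (1 - c) ^ k.
Proof. unfold K_deriv. rewrite Rmult_0_r, Rminus_0_r, Rpower_1_l. ring. Qed.

Lemma is_series_K_deriv_taylor s c k w0 h : 0 < s -> 0 < c < 1 -> 0 <= w0 -> 0 <= h -> w0 + h < 1 ->
  is_series (fun j => K_deriv s c (k + j) w0 * h ^ j / INR (fact j)) (K_deriv s c k (w0 + h)).
Proof.
  intros Hs Hc Hw0 Hh Hwh.
  set (B0 := 1 - (1 - c) * w0).
  assert (HB0 : 0 < B0) by (unfold B0; nra).
  set (u := (1 - c) * h / B0).
  assert (Hu : Rabs u < 1).
  { unfold u. rewrite Rabs_pos_eq by (apply Rmult_le_pos; [nra | left; apply Rinv_0_lt_compat; lra]).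
    apply Rmult_lt_reg_r with B0; auto. unfold Rdiv. rewrite Rmult_assoc, Rinv_l by lra.
    unfold B0. nra. }
  assert (Hsk : 0 < s + INR k) by (pose proof (pos_INR k); lra).
  set (K0 := poch s k * (1 - c) ^ k * Rpower B0 (- (s + INR k))).
  assert (E : K_deriv s c k (w0 + h) = K0 * Rpower (1 - u) (- (s + INR k))).
  { unfold K_deriv, K0. rewrite (Rmult_assoc (poch s k * (1 - c) ^ k) (Rpower B0 _)).
    rewrite Rpower_mult_distr by (auto || (apply Rabs_def2 in Hu; lra)).
    f_equal. f_equal. unfold u, B0. field. unfold B0 in HB0. lra. }
  pose proof (is_pseries_neg_binom (s + INR k) u Hsk Hu) as B. apply is_pseries_R in B.
  rewrite E. eapply is_series_ext; [|exact (is_series_mult_l K0 _ _ B)].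
  intros j. change (K0 * (neg_binom_coef (s + INR k) j * u ^ j)
                    = K_deriv s c (k + j) w0 * h ^ j / INR (fact j)).
  unfold K_deriv, K0, neg_binom_coef, u.
  rewrite poch_add, plus_INR.
  replace (- (s + (INR k + INR j))) with (- ((s + INR k) + INR j)) by ring.
  fold B0. rewrite (Rpower_opp_plus_INR B0 (s + INR k) j) by auto.
  rewrite pow_add. unfold Rdiv. rewrite !Rpow_mult_distr, pow_inv.
  field. split; [apply INR_fact_neq_0 | apply pow_nonzero; lra].
Qed.

Lemma continuity_pt_K_deriv s c k w : 0 < c < 1 -> w < 1 -> continuity_pt (K_deriv s c k) w.
Proof.
  intros Hc Hw. apply continuity_pt_filterlim.
  apply (@ex_derive_continuous R_AbsRing R_NormedModule (K_deriv s c k) w).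
  unfold K_deriv, Rpower. auto_derive. nra.
Qed.

Lemma continuity_pt_quadratic (a0 a1 a2 : R) x :
  continuity_pt (fun y => a0 + a1 * y + a2 * (y * y)) x.
Proof.
  apply continuity_pt_filterlim.
  apply (@ex_derive_continuous R_AbsRing R_NormedModule (fun y => a0 + a1 * y + a2 * (y * y)) x).
  auto_derive. auto.
Qed.

Lemma continuity_pt_nonneg_left (f : R -> R) x eps : 0 < eps -> continuity_pt f x ->
  (forall v, x - eps < v < x -> 0 <= f v) -> 0 <= f x.
Proof.
  intros He Hc H. destruct (Rle_or_lt 0 (f x)) as [|Hlt]; auto.
  destruct (Hc (- f x / 2)) as [alp [Halp Hal]]; [lra|].
  set (v := x - Rmin alp eps / 2).
  assert (Hm : 0 < Rmin alp eps) by (apply Rmin_glb_lt; lra).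
  assert (Hv : x - eps < v < x) by (unfold v; pose proof (Rmin_r alp eps); lra).
  specialize (H v Hv).
  assert (Hd : Rabs (v - x) < alp).
  { unfold v. rewrite Rabs_left by lra. pose proof (Rmin_l alp eps). lra. }
  assert (Hxv : x <> v) by lra.
  specialize (Hal v (conj (conj I Hxv) Hd)). simpl in Hal. unfold R_dist, Rdist in Hal.
  apply Rabs_def2 in Hal. lra.
Qed.

Section Continuation.

Variables (G : R -> R) (s c d0 : R).
Hypothesis Hs : 0 < s.
Hypothesis Hc : 0 < c < 1.

Definition gap (k : nat) (w : R) : R := Derive_n G k w - K_deriv s c k w.

(* All derivatives of [G] dominate those of [K]; the quadratic lower bound on the gap itself,
   which makes the final comparison strict, is carried along by the bounds on its first two
   derivatives. *)
Definition gap_bounds (w : R) : Prop :=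
  (forall k, 0 <= gap k w) /\ d0 <= gap 2 w /\ d0 * w <= gap 1 w /\ d0 * (w * w) / 2 <= gap 0 w.

(* Taylor expansion at [w0] has nonnegative terms, so [gap_bounds] moves to the right. *)
Lemma gap_bounds_propagate w0 rho e : 0 < rho ->
  (forall w, Rabs (w - w0) < rho -> is_pseries e (w - w0) (G w)) ->
  0 <= w0 -> gap_bounds w0 -> forall h, 0 <= h < rho -> w0 + h < 1 -> gap_bounds (w0 + h).
Proof.
  intros Hrho He Hw0 [Q1 [Q2 [Q3 Q4]]] h Hh Hwh.
  assert (HS : forall k, is_series (fun j => gap (k + j) w0 * h ^ j / INR (fact j)) (gap k (w0 + h))).
  { intros k.
    pose proof (is_series_Derive_n_taylor G w0 rho e Hrho He k h
                  ltac:(rewrite Rabs_pos_eq; lra)) as T1.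
    pose proof (is_series_K_deriv_taylor s c k w0 h Hs Hc Hw0 (proj1 Hh) Hwh) as T2.
    eapply is_series_ext; [|exact (is_series_minus _ _ _ _ T1 T2)].
    intros j. unfold gap. simpl. unfold plus, opp; simpl. field. apply INR_fact_neq_0. }
  assert (P : forall k N, sum_f_R0 (fun j => gap (k + j) w0 * h ^ j / INR (fact j)) N
                          <= gap k (w0 + h)).
  { intros k N. apply is_series_partial_le; auto. intros j.
    apply Rmult_le_pos; [apply Rmult_le_pos; [apply Q1 | apply pow_le; lra]|].
    left. apply Rinv_0_lt_compat, INR_fact_lt_0. }
  split; [|split; [|split]].
  - intros k. eapply Rle_trans; [|apply (P k 0%nat)]. simpl. specialize (Q1 (k + 0)%nat). lra.
  - eapply Rle_trans; [|apply (P 2%nat 0%nat)]. simpl. lra.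
  - eapply Rle_trans; [|apply (P 1%nat 1%nat)]. simpl. nra.
  - eapply Rle_trans; [|apply (P 0%nat 2%nat)]. simpl. nra.
Qed.

Lemma gap_bounds_closed s0 rho e : 0 < rho -> 0 < s0 < 1 ->
  (forall w, Rabs (w - s0) < rho -> is_pseries e (w - s0) (G w)) ->
  (forall v, 0 <= v < s0 -> gap_bounds v) -> gap_bounds s0.
Proof.
  intros Hrho Hs0 He HQ.
  assert (HD : forall k, continuity_pt (gap k) s0).
  { intros k. apply continuity_pt_minus;
      [apply (continuity_pt_Derive_n G s0 rho e); auto | apply continuity_pt_K_deriv; lra]. }
  assert (HQ' : forall v, s0 - s0 < v < s0 -> gap_bounds v) by (intros; apply HQ; lra).
  split; [|split; [|split]].
  - intros k. apply (continuity_pt_nonneg_left (gap k) s0 s0); [lra | apply HD|].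
    intros v Hv. apply (HQ' v Hv).
  - enough (0 <= gap 2 s0 - d0) by lra.
    apply (continuity_pt_nonneg_left (fun v => gap 2 v - d0) s0 s0); [lra| |].
    + apply continuity_pt_minus; [apply HD | apply continuity_pt_const; intros ? ?; auto].
    + intros v Hv. destruct (HQ' v Hv) as [_ [H _]]. lra.
  - enough (0 <= gap 1 s0 - (0 + d0 * s0 + 0 * (s0 * s0))) by lra.
    apply (continuity_pt_nonneg_left (fun v => gap 1 v - (0 + d0 * v + 0 * (v * v))) s0 s0);
      [lra| |].
    + apply continuity_pt_minus; [apply HD | apply continuity_pt_quadratic].
    + intros v Hv. destruct (HQ' v Hv) as [_ [_ [H _]]]. lra.
  - enough (0 <= gap 0 s0 - (0 + 0 * s0 + d0 / 2 * (s0 * s0))) by lra.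
    apply (continuity_pt_nonneg_left (fun v => gap 0 v - (0 + 0 * v + d0 / 2 * (v * v))) s0 s0);
      [lra| |].
    + apply continuity_pt_minus; [apply HD | apply continuity_pt_quadratic].
    + intros v Hv. destruct (HQ' v Hv) as [_ [_ [_ H]]]. lra.
Qed.

(* Real induction: the supremum [m] of the [x] with [gap_bounds] on [[0, x]] is at least 1,
   since [gap_bounds m] holds by closedness and then propagates past [m] if [m < 1]. *)
Lemma gap_bounds_on_unit_interval :
  (forall w0, 0 <= w0 < 1 -> analytic_at G w0) ->
  gap_bounds 0 -> forall w, 0 <= w < 1 -> gap_bounds w.
Proof.
  intros Han HQ0.
  set (E := fun x => 0 <= x < 1 /\ forall v, 0 <= v <= x -> gap_bounds v).
  assert (HE0 : E 0) by (split; [lra|]; intros v Hv; replace v with 0 by lra; auto).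
  assert (Hb : bound E) by (exists 1; intros x [Hx _]; lra).
  destruct (completeness E Hb (ex_intro _ 0 HE0)) as [m [Hub Hlub]].
  assert (Hm0 : 0 <= m) by (apply Hub, HE0).
  assert (Hbelow : forall v, 0 <= v < m -> gap_bounds v).
  { intros v Hv. destruct (Classical_Prop.classic (exists x, E x /\ v < x)) as [[x [[_ Hx] Hvx]]|Hn].
    - apply Hx; lra.
    - exfalso. enough (m <= v) by lra. apply Hlub. intros x Hx.
      destruct (Rle_or_lt x v) as [|Hlt]; auto. exfalso; apply Hn; eauto. }
  enough (Hm1 : 1 <= m) by (intros w Hw; apply Hbelow; lra).
  destruct (Rle_or_lt 1 m) as [|Hlt]; auto. exfalso.
  destruct (Han m ltac:(lra)) as [rho [Hrho [e He]]].
  assert (HQm : gap_bounds m).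
  { destruct (Req_dec m 0) as [->|Hne0]; auto.
    apply (gap_bounds_closed m rho e); auto; lra. }
  set (h := Rmin rho (1 - m) / 2).
  assert (Hh : 0 < h) by (unfold h; assert (0 < Rmin rho (1 - m)) by (apply Rmin_glb_lt; lra); lra).
  assert (Hh1 : h < rho) by (unfold h; pose proof (Rmin_l rho (1 - m)); lra).
  assert (Hh2 : m + h < 1) by (unfold h; pose proof (Rmin_r rho (1 - m)); lra).
  assert (HE : E (m + h)).
  { split; [lra|]. intros v Hv. destruct (Rlt_or_le v m) as [Hvm|Hvm].
    - apply Hbelow; lra.
    - replace v with (m + (v - m)) by ring.
      apply (gap_bounds_propagate m rho e); auto; lra. }
  specialize (Hub _ HE). lra.
Qed.

End Continuation.

Section RatioProduct.

Variables (q : nat) (a b : nat -> R).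
Hypothesis Hab : forall i, (i < q)%nat -> 0 < a i < b i.

Lemma ratio_prod_bounds : (1 <= q)%nat -> 0 < prodR q (fun i => a i / b i) < 1.
Proof.
  intros Hq. split.
  - apply prodR_pos. intros i Hi. destruct (Hab i Hi). apply Rdiv_lt_0_compat; lra.
  - rewrite <- (prodR_one q). apply prodR_lt; auto. intros i Hi. destruct (Hab i Hi).
    split; [apply Rdiv_lt_0_compat; lra|]. apply Rmult_lt_reg_r with (b i); [lra|].
    unfold Rdiv. rewrite Rmult_assoc, Rinv_l; lra.
Qed.

Lemma poch_ratio_prod_ge_pow n : prodR q (fun i => a i / b i) ^ n <= poch_ratio_prod q a b n.
Proof.
  rewrite <- prodR_pow. apply prodR_le. intros i Hi. destruct (Hab i Hi).
  split; [apply pow_le, Rlt_le, Rdiv_lt_0_compat; lra|]. apply poch_ratio_ge_geom; lra.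
Qed.

Lemma poch_ratio_prod_2_gt_sqr : (1 <= q)%nat ->
  prodR q (fun i => a i / b i) ^ 2 < poch_ratio_prod q a b 2.
Proof.
  intros Hq. rewrite <- prodR_pow. apply prodR_lt; auto. intros i Hi. destruct (Hab i Hi).
  split; [apply pow_lt, Rdiv_lt_0_compat; lra|]. simpl.
  rewrite !Rmult_1_l, !Rmult_1_r, !Rplus_0_r. apply Rminus_lt_0.
  replace (a i * (a i + 1) / (b i * (b i + 1)) - a i / b i * (a i / b i))
    with (a i * (b i - a i) / (b i * b i * (b i + 1))) by (field; lra).
  apply Rdiv_lt_0_compat; [nra|]. apply Rmult_lt_0_compat; nra.
Qed.

Lemma fdiff_poch_ratio_prod_ge k :
  (1 - prodR q (fun i => a i / b i)) ^ k <= fdiff (poch_ratio_prod q a b) 0 k.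
Proof.
  destruct (fdiff_scaled_poch_ratio_prod a b q Hab 1 ltac:(lra)) as [_ Jensen].
  specialize (Jensen k). rewrite Rmult_1_l, poch_ratio_prod_1 in Jensen.
  rewrite (fdiff_ext _ (fun k => 1 ^ k * poch_ratio_prod q a b k)); [exact Jensen|].
  intros j. rewrite pow1. ring.
Qed.

Lemma fdiff_poch_ratio_prod_2_gt : (1 <= q)%nat ->
  (1 - prodR q (fun i => a i / b i)) ^ 2 < fdiff (poch_ratio_prod q a b) 0 2.
Proof.
  intros Hq. pose proof (poch_ratio_prod_2_gt_sqr Hq) as H2.
  assert (H0 : poch_ratio_prod q a b 0 = 1).
  { rewrite <- (prodR_one q). apply prodR_ext. intros i Hi. simpl. field. }
  simpl fdiff. rewrite H0, poch_ratio_prod_1. simpl in H2 |- *. lra.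
Qed.

End RatioProduct.

Lemma Rpower_lt_series_poch (s c z l : R) (m : nat -> R) : 0 < s -> 0 < c < 1 -> 0 < z < 1 ->
  (forall n, c ^ n <= m n) -> c ^ 2 < m 2%nat ->
  is_series (fun n => poch s n * m n / INR (fact n) * z ^ n) l ->
  Rpower (1 - c * z) (- s) < l.
Proof.
  intros Hs Hc Hz Hmn Hm2 Hl.
  assert (Hcz : Rabs (c * z) < 1) by (rewrite Rabs_pos_eq by nra; nra).
  pose proof (is_pseries_neg_binom s (c * z) Hs Hcz) as B. apply is_pseries_R in B.
  apply (is_series_lt _ _ _ _ B Hl).
  - intros n. unfold neg_binom_coef. rewrite Rpow_mult_distr.
    assert (0 <= poch s n / INR (fact n) * z ^ n).
    { apply Rmult_le_pos; [apply Rlt_le, neg_binom_coef_pos; auto | apply pow_le; lra]. }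
    specialize (Hmn n). unfold Rdiv in *. nra.
  - unfold neg_binom_coef. rewrite Rpow_mult_distr.
    assert (0 < poch s 2 / INR (fact 2) * z ^ 2).
    { apply Rmult_lt_0_compat; [apply neg_binom_coef_pos; auto | apply pow_lt; lra]. }
    unfold Rdiv in *. nra.
Qed.

Lemma analytic_at_pfaff s F : 0 < s -> real_analytic_on (fun z => z < 1) F ->
  forall w0, w0 < 1 -> analytic_at (pfaff s F) w0.
Proof.
  intros Hs HF w0 Hw0.
  assert (Hz0 : w0 / (w0 - 1) < 1).
  { apply (Rmult_lt_reg_r (1 - w0)); [lra|]. unfold Rdiv.
    replace (w0 * / (w0 - 1) * (1 - w0)) with (- w0) by (field; lra). lra. }
  destruct (HF _ Hz0) as [r [Hr [c Hc]]].
  destruct (is_pseries_pfaff s F _ r c Hs Hz0 Hr Hc) as [rho [Hrho Hexp]].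
  replace (w0 / (w0 - 1) / (w0 / (w0 - 1) - 1)) with w0 in Hexp by (field; lra).
  exists rho. split; [exact Hrho|]. eexists. exact Hexp.
Qed.

Lemma Derive_n_pfaff_0 s F (m : nat -> R) : 0 < s ->
  (forall z, -1 < z < 1 -> is_pseries (fun n => poch s n * m n / INR (fact n)) z (F z)) ->
  forall k, Derive_n (pfaff s F) k 0 = poch s k * fdiff m 0 k.
Proof.
  intros Hs HF k.
  assert (HF0 : forall z, Rabs (z - 0) < 1 ->
                  is_pseries (fun n => poch s n * m n / INR (fact n)) (z - 0) (F z)).
  { intros z Hz. rewrite Rminus_0_r in *. apply HF. apply Rabs_def2 in Hz. lra. }
  destruct (is_pseries_pfaff s F 0 1 _ Hs ltac:(lra) ltac:(lra) HF0) as [rho [Hrho Hexp]].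
  replace (0 / (0 - 1)) with 0 in Hexp by (unfold Rdiv; ring).
  rewrite (Derive_n_center _ 0 rho _ Hrho Hexp k).
  unfold pfaff_coef. rewrite Rminus_0_r, Rpower_1_l, Rmult_1_l, fdiff_alt_sum.
  rewrite Rmult_comm, scal_sum, scal_sum. apply sum_eq. intros n Hn. cbv beta.
  rewrite pow1, binom_C by auto. unfold Binomial.C, neg_binom_coef.
  replace (poch s k) with (poch s n * poch (s + INR n) (k - n))
    by (rewrite <- poch_add; f_equal; lia).
  pose proof (INR_fact_neq_0 n). pose proof (INR_fact_neq_0 (k - n)).
  pose proof (INR_fact_neq_0 k). simpl (0 + n)%nat. field. auto.
Qed.

Lemma Rpower_lt_of_Derive_n_0 (G : R -> R) s c : 0 < s -> 0 < c < 1 ->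
  (forall w0, 0 <= w0 < 1 -> analytic_at G w0) ->
  (forall k, poch s k * (1 - c) ^ k <= Derive_n G k 0) ->
  poch s 2 * (1 - c) ^ 2 < Derive_n G 2 0 ->
  forall w, 0 < w < 1 -> Rpower (1 - (1 - c) * w) (- s) < G w.
Proof.
  intros Hs Hc Han Hk H2 w Hw.
  set (d0 := Derive_n G 2 0 - poch s 2 * (1 - c) ^ 2).
  assert (Hgap : forall k, gap G s c k 0 = Derive_n G k 0 - poch s k * (1 - c) ^ k)
    by (intros; unfold gap; rewrite K_deriv_0; reflexivity).
  assert (HQ0 : gap_bounds G s c d0 0).
  { unfold gap_bounds. rewrite !Hgap, !Rmult_0_r.
    pose proof (Hk 0%nat). pose proof (Hk 1%nat).
    split; [intros k; rewrite Hgap; specialize (Hk k); lra|]. unfold d0. lra. }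
  destruct (gap_bounds_on_unit_interval G s c d0 Hs Hc Han HQ0 w ltac:(lra)) as [_ [_ [_ Q0]]].
  assert (0 < d0 * (w * w) / 2) by (apply Rdiv_lt_0_compat; [apply Rmult_lt_0_compat; unfold d0; nra|lra]).
  unfold gap, K_deriv in Q0. simpl Derive_n in Q0. simpl in Q0.
  rewrite Rplus_0_r, !Rmult_1_l in Q0. lra.
Qed.

Lemma Rpower_Rinv_opp x s : 0 < x -> Rpower (/ x) (- s) = Rpower x s.
Proof. intros Hx. unfold Rpower. rewrite ln_Rinv by lra. f_equal. ring. Qed.

Lemma pfaff_at_shifted s F x : -1 < x -> pfaff s F (x / (1 + x)) = Rpower (1 + x) s * F (- x).
Proof.
  intros Hx. unfold pfaff.
  replace (x / (1 + x) / (x / (1 + x) - 1)) with (- x) by (field; lra).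
  replace (1 - x / (1 + x)) with (/ (1 + x)) by (field; lra).
  rewrite Rpower_Rinv_opp by lra. reflexivity.
Qed.

Lemma Rinv_Rpower_lt_of_pfaff s F c x : 0 < c -> 0 < x ->
  (forall w, 0 < w < 1 -> Rpower (1 - (1 - c) * w) (- s) < pfaff s F w) ->
  / Rpower (1 + x * c) s < F (- x).
Proof.
  intros Hc Hx HK.
  assert (Hw : 0 < x / (1 + x) < 1).
  { split; [apply Rdiv_lt_0_compat; lra|]. apply (Rmult_lt_reg_r (1 + x)); [lra|].
    unfold Rdiv. rewrite Rmult_assoc, Rinv_l; lra. }
  specialize (HK _ Hw). rewrite pfaff_at_shifted in HK by lra.
  replace (1 - (1 - c) * (x / (1 + x))) with ((1 + x * c) * / (1 + x)) in HK by (field; lra).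
  assert (0 < 1 + x * c) by nra.
  assert (0 < / (1 + x)) by (apply Rinv_0_lt_compat; lra).
  rewrite <- Rpower_mult_distr, Rpower_Rinv_opp, Rpower_Ropp in HK by lra.
  apply Rmult_lt_reg_r with (Rpower (1 + x) s); [apply exp_pos|]. lra.
Qed.

Theorem theorem3 (q : nat) (a b : nat -> R) (sigma : R) (F : R -> R) :
  (1 <= q)%nat ->
  (forall i, (i < q)%nat -> 0 < a i /\ a i < b i) ->
  1 <= sigma ->
  is_hyp_pFq q sigma a b F ->
  forall x : R, -1 < x -> x <> 0 ->
    / Rpower (1 + x * prodR q (fun i => a i / b i)) sigma < F (- x).
Proof.
  intros Hq Hab Hs [Han Hser] x Hx Hx0.
  set (c := prodR q (fun i => a i / b i)).
  assert (Hc : 0 < c < 1) by (apply ratio_prod_bounds; auto).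
  assert (Hsig : 0 < sigma) by lra.
  destruct (Rdichotomy _ _ Hx0) as [Hneg | Hpos].
  - replace (/ Rpower (1 + x * c) sigma) with (Rpower (1 - c * - x) (- sigma))
      by (rewrite Rpower_Ropp; do 2 f_equal; ring).
    apply (Rpower_lt_series_poch sigma c (- x) _ (poch_ratio_prod q a b)); try lra.
    + apply poch_ratio_prod_ge_pow; auto.
    + apply poch_ratio_prod_2_gt_sqr; auto.
    + apply is_pseries_R, Hser. lra.
  - apply (Rinv_Rpower_lt_of_pfaff sigma F c x); try lra.
    pose proof (Derive_n_pfaff_0 sigma F _ Hsig Hser) as HD.
    apply (Rpower_lt_of_Derive_n_0 (pfaff sigma F) sigma c Hsig Hc).
    + intros w0 Hw0. apply analytic_at_pfaff; auto. lra.
    + intros k. rewrite HD. apply Rmult_le_compat_l;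
        [apply Rlt_le, poch_pos; lra | apply fdiff_poch_ratio_prod_ge; auto].
    + rewrite HD. apply Rmult_lt_compat_l;
        [apply poch_pos; lra | apply fdiff_poch_ratio_prod_2_gt; auto].
Qed.
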